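(* The assignment $\mathcal{P}$ described below is an algebra over the operad $\mathcal{W}$ of black boxes and wiring diagrams; that is: (1) (identity law) for every black box $Z$ and every $f\in\mathcal{P}(Z)$, $\mathcal{P}(\mathrm{id}_Z)(f)=f$; (2) (composition law) for every wiring diagram $\psi\colon (Y(i))_{i\in n}\to Z$, every family of wiring diagrams $\phi_i\colon (X_j)_{j\in m_i}\to Y(i)$ ($i\in n$), and every family of propagators $f_j\in\mathcal{P}(X_j)$ ($j\in m=\coprod_i m_i$), one has $$\mathcal{P}\big(\psi\circ(\phi_i)_{i\in n}\big)\big((f_j)_{j\in m}\big)=\mathcal{P}(\psi)\Big(\big(\mathcal{P}(\phi_i)((f_j)_{j\in m_i})\big)_{i\in n}\Big).$$
   Context: Wiring diagrams. A black box $X=(\mathrm{in}(X),\mathrm{out}(X),{\tt vset})$: finite sets of input and output wires with ${\tt vset}$ assigning a pointed set to each wire. For a family $Y=(Y(i))_{i\in n}$ put $\mathrm{in}(Y)=\coprod_i\mathrm{in}(Y(i))$, $\mathrm{out}(Y)=\coprod_i\mathrm{out}(Y(i))$. A wiring diagram $\psi\colon Y\to Z$ consists of a finite set $\mathrm{Del}(\psi)$ of delay nodes with pointed sets ${\tt vset}(d)$ and a supplier assignment $s_\psi\colon\mathrm{Dem}(\psi)=\mathrm{out}(Z)\amalg\mathrm{in}(Y)\amalg\mathrm{Del}(\psi)\to\mathrm{Sup}(\psi)=\mathrm{in}(Z)\amalg\mathrm{out}(Y)\amalg\mathrm{Del}(\psi)$ preserving ${\tt vset}$ with $s_\psi(\mathrm{out}(Z))\subseteq\mathrm{out}(Y)\amalg\mathrm{Del}(\psi)$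 (identified up to bijection of delay nodes). $\mathrm{id}_Z$ has no delay nodes and identity supplier assignment. Composition: for $\psi\colon Y\to Z$ and $\phi_i\colon X_i\to Y(i)$, let $\phi=\bigotimes\phi_i\colon X\to Y$ be the disjoint union; $\omega=\psi\circ\phi$ has $\mathrm{Del}(\omega)=\mathrm{Del}(\phi)\amalg\mathrm{Del}(\psi)$ and $s_\omega=h\circ s_\phi|_{\mathrm{in}(X)\amalg\mathrm{Del}(\phi)}\amalg f\circ s_\psi|_{\mathrm{out}(Z)\amalg\mathrm{Del}(\psi)}$ with $f=\mathrm{id}_{\mathrm{in}(Z)}\amalg s_\phi|_{\mathrm{out}(Y)}\amalg\mathrm{id}_{\mathrm{Del}(\psi)}\colon\mathrm{Sup}(\psi)\to\mathrm{Sup}(\omega)$, $h=(f\circ s_\psi)|_{\mathrm{in}(Y)}\amalg\mathrm{id}_{\mathrm{out}(X)}\amalg\mathrm{id}_{\mathrm{Del}(\phi)}\colon\mathrm{Sup}(\phi)\to\mathrm{Sup}(\omega)$, where $\mathrm{Sup}(\omega)=\mathrm{in}(Z)\amalg\mathrm{out}(X)\amalg\mathrm{Del}(\omega)$. Lists and propagators. $\mathrm{List}(S)=\coprod_{t\in\mathbb{N}}S^t$; $\partial\ell$ drops the last entry of a nonempty list; $[\,]$ is the empty list. A list of tuples in $\prod_k S_k$ is identified with a tuple of lists of equal length (''zipping''). An $n$-historical propagator $f\colon\mathrm{List}(R)\to\mathrm{List}(S)$ satisfies $|f(\ell)|=|\ell|+n$ and $\partial f(\ell)=f(\partial\ell)$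 for $|\ell|\ge1$; $\mathrm{Hist}^n(R,S)$ is their set. For a set $I$ of wires put ${\tt vset}_I=\prod_{i\in I}{\tt vset}(i)$ (a one-point set if $I=\emptyset$), and write $\overline{I}=\mathrm{List}({\tt vset}_I)$. The algebra $\mathcal{P}$. On objects, $\mathcal{P}(Z)=\mathrm{Hist}^1({\tt vset}_{\mathrm{in}(Z)},{\tt vset}_{\mathrm{out}(Z)})$. On a wiring diagram $\psi\colon (Y(i))_{i\in n}\to Z$ and $g_i\in\mathcal{P}(Y(i))$: let $g=\prod_i g_i\colon\overline{\mathrm{in}(Y)}\to\overline{\mathrm{out}(Y)}$ (applied componentwise after unzipping). Let $\mathrm{inDem}(\psi)=\mathrm{in}(Y)\amalg\mathrm{Del}(\psi)$ and $\mathrm{inSup}(\psi)=\mathrm{out}(Y)\amalg\mathrm{Del}(\psi)$. Define $S_\psi=\mathrm{List}(\pi_{s_\psi})\colon\overline{\mathrm{Sup}(\psi)}\to\overline{\mathrm{Dem}(\psi)}$ where $\pi_{s_\psi}((x_a)_{a\in\mathrm{Sup}})=(x_{s_\psi(d)})_{d\in\mathrm{Dem}}$; $S'_\psi=\pi_{\overline{\mathrm{inDem}(\psi)}}\circ S_\psi\colon\overline{\mathrm{Sup}(\psi)}\to\overline{\mathrm{inDem}(\psi)}$; $S''_\psi=\mathrm{List}(\pi_{s_\psi|_{\mathrm{out}(Z)}})\colon\overline{\mathrm{inSup}(\psi)}\to\overline{\mathrm{out}(Z)}$. Let $\delta^1_\psi\colon\overline{\mathrm{Del}(\psi)}\to\overline{\mathrm{Del}(\psi)}$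 be the 1-moment delay, prepending the basepoint: $\delta^1(\ell)=[*,\ell(1),\dots,\ell(t)]$. Set $E_{\psi,g}=g\times\delta^1_\psi\colon\overline{\mathrm{inDem}(\psi)}\to\overline{\mathrm{inSup}(\psi)}$, and define $C_{\psi,g}\colon\overline{\mathrm{in}(Z)}\to\overline{\mathrm{Sup}(\psi)}$ recursively by $C_{\psi,g}([\,])=[\,]$ and, for $|\ell|\geq1$, $C_{\psi,g}(\ell)=\big(\ell,\;E_{\psi,g}\circ S'_\psi\circ C_{\psi,g}(\partial\ell)\big)$ (a pair of equal-length lists in $\overline{\mathrm{in}(Z)}\times\overline{\mathrm{inSup}(\psi)}=\overline{\mathrm{Sup}(\psi)}$). Then $\mathcal{P}(\psi)(g_1,\dots,g_n)=S''_\psi\circ E_{\psi,g}\circ S'_\psi\circ C_{\psi,g}\in\mathcal{P}(Z)$. *)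

From HB Require Import structures.
From mathcomp Require Import all_boot.

Set Implicit Arguments.
Unset Strict Implicit.
Unset Printing Implicit Defensive.

Record pset := PSet { pcar : Type; ppt : pcar }.

Record box := Box {
  bin  : finType;
  bout : finType;
  vin  : bin -> pset;
  vout : bout -> pset }.

Definition Tup (A : Type) (v : A -> pset) := forall a : A, pcar (v a).
Definition ptTup (A : Type) (v : A -> pset) : Tup v := fun a => ppt (v a).

Definition vsum (A B : Type) (vA : A -> pset) (vB : B -> pset) : A + B -> pset :=
  fun x => match x with inl a => vA a | inr b => vB b end.

Definition tjoin (A B : Type) (vA : A -> pset) (vB : B -> pset)
  (ta : Tup vA) (tb : Tup vB) : Tup (vsum vA vB) :=
  fun x => match x as x0 return pcar (vsum vA vB x0) with
           | inl a => ta a | inr b => tb b end.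
Definition tfst (A B : Type) (vA : A -> pset) (vB : B -> pset)
  (t : Tup (vsum vA vB)) : Tup vA := fun a => t (inl a).
Definition tsnd (A B : Type) (vA : A -> pset) (vB : B -> pset)
  (t : Tup (vsum vA vB)) : Tup vB := fun b => t (inr b).

Definition pairL (A B : Type) (vA : A -> pset) (vB : B -> pset)
  (a : seq (Tup vA)) (b : seq (Tup vB)) : seq (Tup (vsum vA vB)) :=
  [seq tjoin p.1 p.2 | p <- zip a b].

Definition castp (P Q : pset) (e : P = Q) (x : pcar P) : pcar Q :=
  match e in _ = R return pcar R with erefl => x end.

Definition dropl (T : Type) (l : seq T) : seq T := take (size l).-1 l.

Definition hist1 (R S : Type) (f : seq R -> seq S) : Prop :=
  (forall l, size (f l) = (size l).+1) /\
  (forall l, 0 < size l -> dropl (f l) = f (dropl l)).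

(* underlying functions of P(Z) = Hist^1(vset_in(Z), vset_out(Z)) *)
Definition prop (Z : box) := seq (Tup (@vin Z)) -> seq (Tup (@vout Z)).

Definition inF (I : finType) (Y : I -> box) : Type := {i : I & bin (Y i)}.
Definition outF (I : finType) (Y : I -> box) : Type := {i : I & bout (Y i)}.
Definition vinF (I : finType) (Y : I -> box) : inF Y -> pset :=
  fun x => vin (projT2 x).
Definition voutF (I : finType) (Y : I -> box) : outF Y -> pset :=
  fun x => vout (projT2 x).

(* Dem = out(Z) + (in(Y) + Del), Sup = in(Z) + (out(Y) + Del).
   The supplier assignment s_psi : Dem -> Sup is given by its two
   restrictions: wd_sO on out(Z) (which by the condition
   s(out Z) \subseteq out(Y) + Del lands in inSup = out(Y) + Del)
   and wd_sI on inDem = in(Y) + Del.  wd_hO / wd_hI: vset-preservation. *)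
Record WD (I : finType) (Y : I -> box) (Z : box) := MkWD {
  wd_Del  : finType;
  wd_vdel : wd_Del -> pset;
  wd_sO   : bout Z -> outF Y + wd_Del;
  wd_sI   : inF Y + wd_Del -> bin Z + (outF Y + wd_Del);
  wd_hO   : forall o, vsum (@voutF I Y) wd_vdel (wd_sO o) = vout o;
  wd_hI   : forall d, vsum (@vin Z) (vsum (@voutF I Y) wd_vdel) (wd_sI d)
                      = vsum (@vinF I Y) wd_vdel d }.

Arguments wd_Del {I Y Z}.
Arguments wd_vdel {I Y Z}.
Arguments wd_sO {I Y Z}.
Arguments wd_sI {I Y Z}.
Arguments wd_hO {I Y Z}.
Arguments wd_hI {I Y Z}.

Section Identity.
Variable Z : box.
Definition idY : unit -> box := fun _ => Z.

Definition id_sO (o : bout Z) : outF idY + void := inl (existT _ tt o).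
Definition id_sI (d : inF idY + void) : bin Z + (outF idY + void) :=
  match d with inl x => inl (projT2 x) | inr v => match v with end end.

Lemma id_hO o : vsum (@voutF _ idY) (fun v : void => match v with end) (id_sO o)
                = vout o.
Proof. by []. Qed.

Lemma id_hI d : vsum (@vin Z) (vsum (@voutF _ idY) (fun v : void => match v with end))
                  (id_sI d) = vsum (@vinF _ idY) (fun v : void => match v with end) d.
Proof. by case: d => [[[] x]|[]]. Qed.

Definition wd_id : WD idY Z :=
  @MkWD _ idY Z void (fun v : void => match v with end) id_sO id_sI id_hO id_hI.
End Identity.

Unset Implicit Arguments.
Section Composition.
Variables (I : finType) (Y : I -> box) (Z : box) (psi : WD Y Z).
Variables (m : I -> finType) (X : forall i, m i -> box).
Variable phi : forall i : I, WD (X i) (Y i).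

Definition Xc (p : {i : I & m i}) : box := X (projT1 p) (projT2 p).

Definition DelPhi : finType := {i : I & wd_Del (phi i)}.
Definition vdelPhi (p : DelPhi) : pset := wd_vdel (phi (projT1 p)) (projT2 p).
Definition DelOm : finType := (DelPhi + wd_Del psi)%type.
Definition vdelOm : DelOm -> pset := vsum vdelPhi (wd_vdel psi).

Definition vinSupOm := vsum (@voutF _ Xc) vdelOm.
Definition vSupOm := vsum (@vin Z) vinSupOm.
Definition vinSupPsi := vsum (@voutF _ Y) (wd_vdel psi).
Definition vSupPsi := vsum (@vin Z) vinSupPsi.
Definition vinSupPhi i := vsum (@voutF _ (X i)) (wd_vdel (phi i)).
Definition vSupPhi i := vsum (@vin (Y i)) (vinSupPhi i).

Definition embO (i : I) (x : outF (X i) + wd_Del (phi i)) : outF Xc + DelOm :=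
  match x with
  | inl o => inl (existT (fun p => bout (Xc p)) (existT m i (projT1 o)) (projT2 o))
  | inr d => inr (inl (existT _ i d))
  end.

Definition fO (x : outF Y + wd_Del psi) : outF Xc + DelOm :=
  match x with
  | inl o => embO (projT1 o) (wd_sO (phi (projT1 o)) (projT2 o))
  | inr d => inr (inr d)
  end.

Definition fS (a : bin Z + (outF Y + wd_Del psi)) : bin Z + (outF Xc + DelOm) :=
  match a with inl z => inl z | inr x => inr (fO x) end.

Definition hS (i : I) (a : bin (Y i) + (outF (X i) + wd_Del (phi i)))
  : bin Z + (outF Xc + DelOm) :=
  match a with
  | inl y => fS (wd_sI psi (inl (existT _ i y)))
  | inr x => inr (embO i x)
  end.

Definition comp_sO (o : bout Z) : outF Xc + DelOm := fO (wd_sO psi o).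

Definition comp_sI (d : inF Xc + DelOm) : bin Z + (outF Xc + DelOm) :=
  match d with
  | inl x => hS (projT1 (projT1 x)) (wd_sI (phi (projT1 (projT1 x)))
                   (inl (existT _ (projT2 (projT1 x)) (projT2 x))))
  | inr (inl p) => hS (projT1 p) (wd_sI (phi (projT1 p)) (inr (projT2 p)))
  | inr (inr d) => fS (wd_sI psi (inr d))
  end.

Lemma embO_v i x : vinSupOm (embO i x) = vinSupPhi i x.
Proof. by case: x => [[j o]|d]. Qed.

Lemma fO_v x : vinSupOm (fO x) = vinSupPsi x.
Proof.
case: x => [[i o]|d] //=.
exact: (etrans (embO_v _ _) (wd_hO (phi i) o)).
Qed.

Lemma fS_v a : vSupOm (fS a) = vSupPsi a.
Proof. case: a => [z|x] //=; exact: fO_v. Qed.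

Lemma hS_v i a : vSupOm (hS i a) = vSupPhi i a.
Proof.
case: a => [y|x] /=.
  exact: (etrans (fS_v _) (wd_hI psi (inl (existT _ i y)))).
exact: embO_v.
Qed.

Lemma comp_hO o : vinSupOm (comp_sO o) = vout o.
Proof. exact: (etrans (fO_v _) (wd_hO psi o)). Qed.

Lemma comp_hI d : vSupOm (comp_sI d) = vsum (@vinF _ Xc) vdelOm d.
Proof.
case: d => [[[i j] w]|[[i d]|d]] /=.
- exact: (etrans (hS_v _ _) (wd_hI (phi i) (inl (existT _ j w)))).
- exact: (etrans (hS_v _ _) (wd_hI (phi i) (inr d))).
- exact: (etrans (fS_v _) (wd_hI psi (inr d))).
Qed.

Definition wd_comp : WD Xc Z :=
  @MkWD _ Xc Z DelOm vdelOm comp_sO comp_sI comp_hO comp_hI.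
End Composition.

Section Algebra.
Variables (I : finType) (Y : I -> box) (Z : box) (psi : WD Y Z).
Variable g : forall i, prop (Y i).

Let vdel := wd_vdel psi.
Let vinDem := vsum (@vinF _ Y) vdel.
Let vinSup := vsum (@voutF _ Y) vdel.
Let vSup := vsum (@vin Z) vinSup.

(* g = prod_i g_i : List(vset_in(Y)) -> List(vset_out(Y)),
   applied componentwise after unzipping (output length |l|+1). *)
Definition gprod (l : seq (Tup (@vinF _ Y))) : seq (Tup (@voutF _ Y)) :=
  mkseq (fun k (x : outF Y) =>
           nth (ptTup (@vout (Y (projT1 x))))
               (g (projT1 x) (map (fun t (w : bin (Y (projT1 x))) => t (existT _ (projT1 x) w)) l)) k (projT2 x))
        (size l).+1.

Definition Sp (l : seq (Tup vSup)) : seq (Tup vinDem) :=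
  map (fun t d => castp (wd_hI psi d) (t (wd_sI psi d))) l.
Definition Spp (l : seq (Tup vinSup)) : seq (Tup (@vout Z)) :=
  map (fun t o => castp (wd_hO psi o) (t (wd_sO psi o))) l.

Definition delay1 (l : seq (Tup vdel)) : seq (Tup vdel) := ptTup vdel :: l.

Definition Epg (l : seq (Tup vinDem)) : seq (Tup vinSup) :=
  pairL (gprod (map (@tfst _ _ _ _) l)) (delay1 (map (@tsnd _ _ _ _) l)).

Fixpoint Cfuel (n : nat) (l : seq (Tup (@vin Z))) : seq (Tup vSup) :=
  match n with
  | 0 => [::]
  | n'.+1 => pairL l (Epg (Sp (Cfuel n' (dropl l))))
  end.
Definition Cpg (l : seq (Tup (@vin Z))) : seq (Tup vSup) := Cfuel (size l) l.

Definition Palg : prop Z := fun l => Spp (Epg (Sp (Cpg l))).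
End Algebra.

Arguments Palg {I Y Z} psi g _.
Arguments wd_comp {I Y Z} psi {m X} phi.
Arguments Xc {I} m X p.

From Stdlib Require Import FunctionalExtensionality ProofIrrelevance.
From Pilot Require Import Defs.
From HB Require Import structures.
From mathcomp Require Import all_boot.

(* P(psi)(g) reads its outputs off the trace of psi: the values carried, moment
   by moment, by out(Y) and the delay nodes.  As the g i are 1-historical the
   trace is causal, hence a fixpoint of l |-> E (S' (l, trace l)): at moment k
   an output wire of Y(i) carries g i applied to what Y(i) has received, and a
   delay node carries the basepoint at moment 0 and the value of its supplier
   at moment k-1 afterwards.  For id_Z the single box simply receives l.  For
   the composite omega, strong induction on k shows that its trace at moment k
   is the glued trace: on out(X) and Del(phi_i) the trace of phi_i driven by
   what the trace of psi feeds into Y(i), on Del(psi) the trace of psi.  The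
   induction closes because moment k of a 1-historical propagator depends only
   on the first k inputs. *)

Set Implicit Arguments.
Unset Strict Implicit.
Unset Printing Implicit Defensive.

Lemma castp_id (P : pset) (e : P = P) (x : pcar P) : castp e x = x.
Proof. by rewrite (proof_irrelevance _ e erefl). Qed.

Lemma castp_irrelevant (P Q : pset) (e e' : P = Q) (x : pcar P) :
  castp e x = castp e' x.
Proof. by rewrite (proof_irrelevance _ e e'). Qed.

Lemma castp_comp (P Q R : pset) (e1 : P = Q) (e2 : Q = R) (x : pcar P) :
  castp e2 (castp e1 x) = castp (etrans e1 e2) x.
Proof. by case: Q / e1 e2 => e2; case: R / e2. Qed.

Lemma tup_ext (A : Type) (v : A -> pset) (t1 t2 : Tup v) :
  (forall a, t1 a = t2 a) -> t1 = t2.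
Proof. exact: functional_extensionality_dep. Qed.

Lemma size_dropl (T : Type) (l : seq T) : size (dropl l) = (size l).-1.
Proof. by rewrite size_takel // leq_pred. Qed.

Lemma nth_dropl (T : Type) (x0 : T) (l : seq T) k :
  k < (size l).-1 -> nth x0 (dropl l) k = nth x0 l k.
Proof. by move=> hk; rewrite nth_take. Qed.

Lemma map_dropl (T U : Type) (h : T -> U) (l : seq T) :
  map h (dropl l) = dropl (map h l).
Proof. by rewrite /dropl map_take size_map. Qed.

Lemma dropl_cons (T : Type) (x : T) (l : seq T) :
  0 < size l -> dropl (x :: l) = x :: dropl l.
Proof. by case: l. Qed.

Lemma dropl_rcons (T : Type) (l : seq T) (x : T) : dropl (rcons l x) = l.
Proof. by rewrite /dropl size_rcons -cats1 takel_cat // take_size. Qed.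

Lemma hist1_take (R S : Type) (h : seq R -> seq S) (L : seq R) n :
  hist1 h -> n <= size L -> take n.+1 (h L) = h (take n L).
Proof.
case=> size_h causal_h; elim/last_ind: L n => [|L x IH] n.
  by rewrite leqn0 => /eqP ->; rewrite take_oversize ?size_h.
rewrite size_rcons leq_eqVlt => /orP[/eqP ->|ltn].
  by rewrite !take_oversize ?size_h ?size_rcons.
rewrite -cats1 takel_cat // cats1 -IH // -{2}(dropl_rcons L x).
rewrite -causal_h ?size_rcons //.
by rewrite /dropl size_h size_rcons take_takel.
Qed.

Lemma hist1_nth (R S : Type) (h : seq R -> seq S) (y0 : S) (L : seq R) k :
  hist1 h -> k <= size L -> nth y0 (h L) k = nth y0 (h (take k L)) k.
Proof. by move=> hh hk; rewrite -hist1_take // nth_take. Qed.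

Section PairL.
Variables (A B : Type) (vA : A -> pset) (vB : B -> pset).
Implicit Types (a : seq (Tup vA)) (b : seq (Tup vB)).

Lemma size_pairL a b : size (pairL a b) = minn (size a) (size b).
Proof. by rewrite size_map size_zip. Qed.

Lemma nth_pairL a b k : k < size a -> k < size b ->
  nth (ptTup _) (pairL a b) k = tjoin (nth (ptTup _) a k) (nth (ptTup _) b k).
Proof.
move=> ha hb; rewrite (nth_map (ptTup vA, ptTup vB)) ?size_zip ?leq_min ?ha //.
by rewrite nth_zip_cond size_zip leq_min ha hb.
Qed.

Lemma pairL_take a b : pairL a b = pairL a (take (size a) b).
Proof.
apply: (eq_from_nth (x0 := ptTup _)).
  by rewrite !size_pairL size_take_min minnA minnn.
move=> k; rewrite size_pairL leq_min => /andP[ha hb].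
by rewrite !nth_pairL ?nth_take // size_take_min leq_min ha hb.
Qed.

Lemma dropl_pairL a b :
  size a = size b -> dropl (pairL a b) = pairL (dropl a) (dropl b).
Proof.
move=> e; apply: (eq_from_nth (x0 := ptTup _)).
  by rewrite size_dropl !size_pairL !size_dropl e !minnn.
move=> k; rewrite size_dropl size_pairL e minnn => hk.
have hkb : k < size b by apply: leq_trans hk (leq_pred _).
rewrite nth_dropl ?size_pairL ?e ?minnn // !nth_pairL ?size_dropl ?e //.
by rewrite !nth_dropl ?e.
Qed.
End PairL.

Definition proj_in (I : finType) (Y : I -> box) (i : I)
  (L : seq (Tup (@vinF I Y))) : seq (Tup (@vin (Y i))) :=
  map (fun t (w : bin (Y i)) => t (existT _ i w)) L.
Arguments proj_in {I Y} i L.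

Lemma size_proj_in (I : finType) (Y : I -> box) (i : I)
  (L : seq (Tup (@vinF I Y))) :
  size (proj_in i L) = size L.
Proof. exact: size_map. Qed.

Lemma nth_proj_in (I : finType) (Y : I -> box) (i : I)
  (L : seq (Tup (@vinF I Y))) t w :
  t < size L -> nth (ptTup _) (proj_in i L) t w = nth (ptTup _) L t (existT _ i w).
Proof. by move=> ht; rewrite (nth_map (ptTup _)). Qed.

Section Trace.
Variables (I : finType) (Y : I -> box) (Z : box) (psi : WD Y Z).
Variable g : forall i, prop (Y i).
Arguments g : clear implicits.

Local Notation gprod := (gprod I Y g).
Local Notation Sp := (Sp I Y Z psi).
Local Notation Spp := (Spp I Y Z psi).
Local Notation Epg := (Epg I Y Z psi g).
Local Notation Cpg := (Cpg I Y Z psi g).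

(* E_{psi,g} (S'_psi (C_{psi,g} l)): the values on out(Y) + Del(psi), one
   moment longer than l. *)
Definition trace (l : seq (Tup (@vin Z))) := Epg (Sp (Cpg l)).

Definition box_inputs (l : seq (Tup (@vin Z))) : seq (Tup (@vinF I Y)) :=
  map (@tfst _ _ _ _) (Sp (pairL l (trace l))).

Lemma PalgE l : Palg psi g l = Spp (trace l).
Proof. by []. Qed.

Lemma size_gprod l : size (gprod l) = (size l).+1.
Proof. exact: size_mkseq. Qed.

Lemma nth_gprod l k : k <= size l ->
  nth (ptTup _) (gprod l) k =
  fun x => nth (ptTup _) (g (projT1 x) (proj_in (projT1 x) l)) k (projT2 x).
Proof. by move=> hk; rewrite nth_mkseq. Qed.

Lemma size_Sp l : size (Sp l) = size l.
Proof. exact: size_map. Qed.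

Lemma nth_Sp l k : k < size l ->
  nth (ptTup _) (Sp l) k =
  fun d => castp (wd_hI psi d) (nth (ptTup _) l k (wd_sI psi d)).
Proof. by move=> hk; rewrite (nth_map (ptTup _)). Qed.

Lemma dropl_Sp l : dropl (Sp l) = Sp (dropl l).
Proof. by rewrite /Defs.Sp map_dropl. Qed.

Lemma size_Spp l : size (Spp l) = size l.
Proof. exact: size_map. Qed.

Lemma nth_Spp l k : k < size l ->
  nth (ptTup _) (Spp l) k =
  fun o => castp (wd_hO psi o) (nth (ptTup _) l k (wd_sO psi o)).
Proof. by move=> hk; rewrite (nth_map (ptTup _)). Qed.

Lemma dropl_Spp l : dropl (Spp l) = Spp (dropl l).
Proof. by rewrite /Defs.Spp map_dropl. Qed.

Lemma size_Epg l : size (Epg l) = (size l).+1.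
Proof. by rewrite size_pairL size_gprod /= !size_map minnn. Qed.

Lemma nth_Epg l k : k <= size l ->
  nth (ptTup _) (Epg l) k =
  tjoin (nth (ptTup _) (gprod (map (@tfst _ _ _ _) l)) k)
        (nth (ptTup _) (delay1 I Y Z psi (map (@tsnd _ _ _ _) l)) k).
Proof. by move=> hk; rewrite nth_pairL ?size_gprod /delay1 /= ?size_map. Qed.

Lemma size_Cpg l : size (Cpg l) = size l.
Proof.
rewrite /Cpg; move hl: (size l) => n; elim: n l hl => [|n IH] l hl //=.
by rewrite size_pairL size_Epg size_Sp IH ?size_dropl hl ?minnn.
Qed.

Lemma size_trace l : size (trace l) = (size l).+1.
Proof. by rewrite size_Epg size_Sp size_Cpg. Qed.

Lemma size_pairL_trace l : size (pairL l (trace l)) = size l.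
Proof. by rewrite size_pairL size_trace; apply/minn_idPl. Qed.

Lemma CpgE l : Cpg l = pairL l (trace (dropl l)).
Proof.
case hl: (size l) => [|n]; first by move/size0nil: hl => ->.
by rewrite /Defs.Cpg hl /trace /Defs.Cpg size_dropl hl.
Qed.

Lemma size_box_inputs l : size (box_inputs l) = size l.
Proof. by rewrite size_map size_Sp size_pairL_trace. Qed.

Lemma nth_box_inputs l t y : t < size l ->
  nth (ptTup _) (box_inputs l) t y =
  castp (wd_hI psi (inl y))
    (tjoin (nth (ptTup _) l t) (nth (ptTup _) (trace l) t) (wd_sI psi (inl y))).
Proof.
move=> ht; rewrite (nth_map (ptTup _)) ?size_Sp ?size_pairL_trace //.
by rewrite nth_Sp ?size_pairL_trace // nth_pairL // size_trace ltnW.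
Qed.

Lemma nth_trace_del0 l d :
  nth (ptTup _) (trace l) 0 (inr d) = ppt (wd_vdel psi d).
Proof. by rewrite nth_Epg. Qed.

Hypothesis hist1_g : forall i, hist1 (g i).

Lemma dropl_gprod l : 0 < size l -> dropl (gprod l) = gprod (dropl l).
Proof.
move=> hl; apply: (eq_from_nth (x0 := ptTup _)).
  by rewrite size_dropl !size_gprod size_dropl prednK.
move=> k; rewrite size_dropl size_gprod => hk.
rewrite nth_dropl ?size_gprod // !nth_gprod ?(ltnW hk) //; last first.
  by rewrite size_dropl -ltnS prednK.
apply: tup_ext => x; rewrite /proj_in map_dropl -(proj2 (hist1_g _)) ?size_map //.
by rewrite nth_dropl // (proj1 (hist1_g _)) size_map.
Qed.

Lemma dropl_Epg l : 0 < size l -> dropl (Epg l) = Epg (dropl l).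
Proof.
move=> hl; rewrite /Defs.Epg dropl_pairL; last first.
  by rewrite size_gprod /delay1 /= !size_map.
by rewrite dropl_gprod ?size_map // /delay1 dropl_cons ?size_map // !map_dropl.
Qed.

Lemma dropl_trace l : 0 < size l -> dropl (trace l) = trace (dropl l).
Proof.
move hn: (size l) => n; case: n hn => // n; elim: n l => [|n IH] l hl _;
  rewrite /trace dropl_Epg ?size_Sp ?size_Cpg ?hl // dropl_Sp !CpgE;
  rewrite dropl_pairL ?size_trace ?size_dropl ?hl //.
- by have -> : dropl l = [::] by apply/size0nil; rewrite size_dropl hl.
- by rewrite IH ?size_dropl ?hl.
Qed.

(* Causality lets the trace be fed back with itself instead of its truncation. *)
Lemma trace_fix l : trace l = Epg (Sp (pairL l (trace l))).
Proof.
rewrite {1}/trace CpgE; congr (Epg (Sp _)).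
case: l => [|x l] //; rewrite -dropl_trace // (pairL_take _ (trace _)).
by rewrite /dropl size_trace [in RHS]pairL_take take_takel.
Qed.

Lemma nth_trace_out l k x : k <= size l ->
  nth (ptTup _) (trace l) k (inl x) =
  nth (ptTup _) (g (projT1 x) (proj_in (projT1 x) (box_inputs l))) k (projT2 x).
Proof.
move=> hk; rewrite {1}trace_fix nth_Epg ?size_Sp ?size_pairL_trace //.
by rewrite nth_gprod // size_map size_Sp size_pairL_trace.
Qed.

Lemma nth_trace_delS l k d : k < size l ->
  nth (ptTup _) (trace l) k.+1 (inr d) =
  castp (wd_hI psi (inr d))
    (tjoin (nth (ptTup _) l k) (nth (ptTup _) (trace l) k) (wd_sI psi (inr d))).
Proof.
move=> hk; rewrite {1}trace_fix nth_Epg ?size_Sp ?size_pairL_trace //=.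
rewrite (nth_map (ptTup _)) ?size_Sp ?size_pairL_trace //.
by rewrite nth_Sp ?size_pairL_trace // nth_pairL // size_trace ltnW.
Qed.

Lemma hist1_Palg : hist1 (Palg psi g).
Proof.
split=> l; first by rewrite PalgE size_Spp size_trace.
by move=> hl; rewrite PalgE dropl_Spp dropl_trace.
Qed.
End Trace.

Lemma proj_in_box_inputs_id (Z : box) (g : unit -> prop Z) l :
  proj_in tt (box_inputs (wd_id Z) g l) = l.
Proof.
apply: (eq_from_nth (x0 := ptTup _)) => [|t].
  by rewrite size_proj_in size_box_inputs.
rewrite size_proj_in size_box_inputs => ht; apply: tup_ext => w.
by rewrite nth_proj_in ?size_box_inputs // nth_box_inputs // castp_id.
Qed.

Lemma Palg_id (Z : box) (f : prop Z) :
  hist1 f -> forall l, Palg (wd_id Z) (fun _ => f) l = f l.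
Proof.
move=> hf l; have hg : forall i : unit, hist1 ((fun _ => f) i) by [].
apply: (eq_from_nth (x0 := ptTup _)) => [|k].
  by rewrite PalgE size_Spp size_trace (proj1 hf).
rewrite PalgE size_Spp size_trace => hk; rewrite nth_Spp ?size_trace //.
apply: tup_ext => o.
by rewrite castp_id (nth_trace_out _ hg) // proj_in_box_inputs_id.
Qed.

Section Composition.
Variables (I : finType) (Y : I -> box) (Z : box) (psi : WD Y Z).
Variables (m : I -> finType) (X : forall i, m i -> box).
Arguments X : clear implicits.
Variable phi : forall i : I, WD (X i) (Y i).
Arguments phi : clear implicits.
Variable f : forall p : {i : I & m i}, prop (X (projT1 p) (projT2 p)).
Arguments f : clear implicits.
Hypothesis hist1_f : forall p, hist1 (f p).

Local Notation f_ i := (fun j => f (existT m i j)).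
Local Notation G := (fun i => Palg (phi i) (f_ i)).
Local Notation omega := (wd_comp psi phi).

Lemma hist1_G i : hist1 (G i).
Proof. exact: (hist1_Palg (phi i) (fun j => hist1_f (existT m i j))). Qed.

Definition inner_input (i : I) (l : seq (Tup (@vin Z)))
  : seq (Tup (@vin (Y i))) :=
  proj_in i (box_inputs psi G l).

Lemma size_inner_input i l : size (inner_input i l) = size l.
Proof. by rewrite size_proj_in size_box_inputs. Qed.

Local Notation inner_trace i l := (trace (phi i) (f_ i) (inner_input i l)).

(* The candidate for the trace of omega at moment k. *)
Definition glued (l : seq (Tup (@vin Z))) (k : nat)
  : Tup (vsum (@voutF _ (Xc m X)) (wd_vdel omega)) :=
  fun x =>
  match x as x0 return pcar (vsum (@voutF _ (Xc m X)) (wd_vdel omega) x0) with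
  | inl o => nth (ptTup _) (inner_trace (projT1 (projT1 o)) l) k
               (inl (existT (fun j => bout (X (projT1 (projT1 o)) j))
                            (projT2 (projT1 o)) (projT2 o)))
  | inr (inl p) => nth (ptTup _) (inner_trace (projT1 p) l) k (inr (projT2 p))
  | inr (inr d) => nth (ptTup _) (trace psi G l) k (inr d)
  end.

Lemma glued_embO l t i x :
  castp (embO_v I Y Z psi m X phi i x) (glued l t (embO I Y Z psi m X phi i x))
  = nth (ptTup _) (inner_trace i l) t x.
Proof. by case: x => [[j o]|d]; rewrite castp_id. Qed.

Lemma glued_fO l t b : t <= size l ->
  castp (fO_v I Y Z psi m X phi b) (glued l t (fO I Y Z psi m X phi b))
  = nth (ptTup _) (trace psi G l) t b.
Proof.
move=> ht; case: b => [[i o]|d]; last by rewrite castp_id.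
rewrite (nth_trace_out _ hist1_G) // PalgE nth_Spp; last first.
  by rewrite size_trace size_proj_in size_box_inputs ltnS.
by rewrite -glued_embO castp_comp; apply: castp_irrelevant.
Qed.

Lemma glued_fS l t b : t <= size l ->
  castp (fS_v I Y Z psi m X phi b)
    (tjoin (nth (ptTup _) l t) (glued l t) (fS I Y Z psi m X phi b))
  = tjoin (nth (ptTup _) l t) (nth (ptTup _) (trace psi G l) t) b.
Proof.
move=> ht; case: b => [z|b]; first by rewrite castp_id.
by apply: etrans _ (glued_fO b ht); apply: castp_irrelevant.
Qed.

Lemma glued_hS l t i a : t < size l ->
  castp (hS_v I Y Z psi m X phi i a)
    (tjoin (nth (ptTup _) l t) (glued l t) (hS I Y Z psi m X phi i a))
  = tjoin (nth (ptTup _) (inner_input i l) t) (nth (ptTup _) (inner_trace i l) t) a.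
Proof.
move=> ht; case: a => [y|x]; last first.
  by apply: etrans _ (glued_embO l t x); apply: castp_irrelevant.
rewrite /tjoin nth_proj_in ?size_box_inputs // nth_box_inputs //.
by rewrite -(glued_fS _ (ltnW ht)) castp_comp; apply: castp_irrelevant.
Qed.

Section Step.
Variables (l : seq (Tup (@vin Z))) (k : nat).
Hypothesis hk : k <= size l.
Hypothesis agree :
  forall t, t < k -> nth (ptTup _) (trace omega f l) t = glued l t.

Lemma take_box_inputs_comp i j :
  take k (proj_in (existT m i j) (box_inputs omega f l))
  = take k (proj_in j (box_inputs (phi i) (f_ i) (inner_input i l))).
Proof.
apply: (eq_from_nth (x0 := ptTup _)).
  rewrite !size_take_min size_proj_in (size_proj_in j) !size_box_inputs.
  by rewrite size_inner_input.
move=> t; rewrite size_take_min size_proj_in size_box_inputs leq_min => /andP[htk htl].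
rewrite !nth_take //; apply: tup_ext => w.
rewrite nth_proj_in ?(@nth_proj_in (m i) (X i) j) ?size_box_inputs //;
  rewrite ?size_inner_input //.
rewrite !nth_box_inputs ?size_inner_input // agree //.
by rewrite -(glued_hS _ htl) castp_comp; apply: castp_irrelevant.
Qed.

Lemma nth_trace_comp_step : nth (ptTup _) (trace omega f l) k = glued l k.
Proof.
have hist1_fi i j : hist1 (f_ i j) by apply: hist1_f.
apply: tup_ext => -[[[i j] o]|[[i d]|d]].
- rewrite (nth_trace_out omega hist1_f) // (hist1_nth _ (hist1_f _));
    rewrite ?size_proj_in ?size_box_inputs //.
  rewrite take_box_inputs_comp /glued; cbn [projT1 projT2].
  rewrite (nth_trace_out (phi i) (hist1_fi i)) ?size_inner_input //.
  cbn [projT1 projT2]; apply: (congr1 (fun s => s o)); apply/esym/hist1_nth.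
    exact: (hist1_f (existT m i j)).
  by rewrite (size_proj_in j) size_box_inputs size_inner_input.
- case: k hk agree => [|t] ht agree'; first by rewrite /glued !nth_trace_del0.
  rewrite (nth_trace_delS (psi := omega) hist1_f) // agree' // /glued.
  cbn [projT1 projT2].
  rewrite (nth_trace_delS (psi := phi i) (hist1_fi i)) ?size_inner_input //.
  by rewrite -(glued_hS _ ht) castp_comp; apply: castp_irrelevant.
- case: k hk agree => [|t] ht agree'; first by rewrite /glued !nth_trace_del0.
  rewrite (nth_trace_delS (psi := omega) hist1_f) // agree' // /glued.
  rewrite (nth_trace_delS hist1_G) //.
  by rewrite -(glued_fS _ (ltnW ht)) castp_comp; apply: castp_irrelevant.
Qed.
End Step.

Lemma nth_trace_comp l k :
  k <= size l -> nth (ptTup _) (trace omega f l) k = glued l k.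
Proof.
elim/ltn_ind: k => k IH hk; apply: nth_trace_comp_step => // t htk.
exact: IH (ltnW (leq_trans htk hk)).
Qed.

Lemma Palg_comp l : Palg omega f l = Palg psi G l.
Proof.
apply: (eq_from_nth (x0 := ptTup _)) => [|k].
  by rewrite !PalgE !size_Spp !size_trace.
rewrite PalgE size_Spp size_trace => hk; rewrite PalgE !nth_Spp ?size_trace //.
apply: tup_ext => o; rewrite nth_trace_comp // -(glued_fO _ hk) castp_comp.
exact: castp_irrelevant.
Qed.
End Composition.

Theorem theorem3p14 :
  (* (1) identity law *)
  (forall (Z : box) (f : prop Z), hist1 f ->
     forall l, Palg (wd_id Z) (fun _ => f) l = f l)
  /\
  (* (2) composition law *)
  (forall (I : finType) (Y : I -> box) (Z : box) (psi : WD Y Z)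
          (m : I -> finType) (X : forall i, m i -> box)
          (phi : forall i : I, WD (X i) (Y i))
          (f : forall p : {i : I & m i}, prop (X (projT1 p) (projT2 p))),
     (forall p, hist1 (f p)) ->
     forall l,
       Palg (wd_comp psi phi) f l
       = Palg psi (fun i => Palg (phi i) (fun j => f (existT m i j))) l).
Proof.
split; first exact: Palg_id.
by move=> I Y Z psi m X phi f hf l; apply: Palg_comp.
Qed.
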